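(* For every $d\ge 2$, $\mu(Q_d)\le 2\,\mu(Q_{d-1})$.
   Context: $Q_d$ is the hypercube with vertex set $\{0,1\}^d$, two vertices adjacent iff their strings differ in exactly one bit. For a connected graph $G$ and $X\subseteq V(G)$, two vertices $x,y$ are $X$-visible if some shortest $x,y$-path has no internal vertex in $X$. $X$ is a mutual-visibility set if every two vertices of $X$ are $X$-visible; $\mu(G)$ is the maximum cardinality of a mutual-visibility set of $G$. *)

From mathcomp Require Import all_boot.
From mathcomp Require Import boolp.
Set Implicit Arguments. Unset Strict Implicit. Unset Printing Implicit Defensive.

Section Graphs.
Variable T : finType.
Variable e : rel T.

(* [x :: p] is a walk from x to y along edges of e (length = size p). *)
Definition walk (x : T) (p : seq T) (y : T) : bool :=
  path e x p && (last x p == y).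

Definition shortest_path (x : T) (p : seq T) (y : T) : Prop :=
  walk x p y /\ forall q, walk x q y -> size p <= size q.

(* internal vertices of the path x :: p (all vertices except both ends) *)
Definition internal (p : seq T) : seq T := take (size p).-1 p.

Definition visible (X : {set T}) (x y : T) : Prop :=
  exists p, shortest_path x p y /\ forall v, v \in internal p -> v \notin X.

Definition mutual_visibility_set (X : {set T}) : Prop :=
  forall x y, x \in X -> y \in X -> visible X x y.

Definition mu : nat :=
  \max_(X : {set T} | `[< mutual_visibility_set X >]) #|X|.
End Graphs.

Definition hvertex (d : nat) := {ffun 'I_d -> bool}.
Definition hcube_adj (d : nat) : rel (hvertex d) :=
  fun x y => #|[set i | x i != y i]| == 1.
Arguments hcube_adj : clear implicits.

Definition mu_Q (d : nat) : nat := mu (hcube_adj d).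

From mathcomp Require Import all_boot boolp.
Set Implicit Arguments. Unset Strict Implicit. Unset Printing Implicit Defensive.

(* Write d = n+1 and split the vertices of Q_(n+1) by their last bit b into
   two slices, each a copy of Q_n via the maps [proj] (forget the last bit)
   and [ext b] (append the bit b).  A mutual-visibility set X of Q_(n+1)
   meets each slice in a set whose projection is a mutual-visibility set of
   Q_n, hence #|X| <= mu(Q_n) + mu(Q_n).
   The key point is that a shortest path between two vertices of a slice
   never leaves that slice.  To see it, push a walk onto the slice with the
   map x |-> ext b (proj x) and drop the repeated vertices ("collapse"):
   this map sends edges to edges or to single vertices, so the result is
   again a walk with the same ends, and it is strictly shorter as soon as
   the walk crosses between the slices. *)

Section Collapse.
Variables (T : finType) (e : rel T) (f : T -> T).

(* The image under f of the walk x :: p, with consecutive repetitions of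
   the same image vertex removed (the image of x itself is left implicit). *)
Fixpoint collapse (x : T) (p : seq T) : seq T :=
  match p with
  | [::] => [::]
  | z :: p' => if f z == f x then collapse z p' else f z :: collapse z p'
  end.

Lemma collapse_size x p : size (collapse x p) <= size p.
Proof.
elim: p x => [|z p IH] x //=; case: eqP => _ /=; last exact: IH.
exact: leq_trans (IH z) (leqnSn _).
Qed.

Lemma collapse_walk x p y :
  (forall u v, e u v -> f u = f v \/ e (f u) (f v)) ->
  walk e x p y -> walk e (f x) (collapse x p) (f y).
Proof.
move=> f_edge; rewrite /walk => /andP[+ /eqP <-]; clear y.
elim: p x => [|z p IH] x /=; first by rewrite eqxx.
move=> /andP[exz /IH /andP[pz lz]].
case: eqP => [<- | fzx]; first by rewrite pz lz.
rewrite /= pz lz !andbT; case: (f_edge _ _ exz) => // fxz.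
by case: fzx; rewrite fxz.
Qed.

Lemma collapse_lt (P : pred T) x p :
  (forall u v, e u v -> P u -> ~~ P v -> f u = f v) ->
  path e x p -> P x -> ~~ all P p -> size (collapse x p) < size p.
Proof.
move=> f_exit; elim: p x => [|z p IH] x //= /andP[exz pz] Px.
case: eqP => [_ _ | fzx]; first by rewrite ltnS collapse_size.
case: (boolP (P z)) => [Pz /= notP | nPz _]; first by rewrite ltnS IH.
by case: fzx; rewrite (f_exit _ _ exz Px nPz).
Qed.
End Collapse.

Lemma mvs_card_le_mu (T : finType) (e : rel T) (X : {set T}) :
  mutual_visibility_set e X -> #|X| <= mu e.
Proof.
move=> mvsX; apply: (leq_bigmax_cond (F := fun Y : {set T} => #|Y|)).
exact: asboolT.
Qed.

Definition hamming m (x y : hvertex m) : nat := #|[set i | x i != y i]|.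

Lemma hamming_eq0 m (x y : hvertex m) : (hamming x y == 0) = (x == y).
Proof.
rewrite /hamming cards_eq0; apply/eqP/eqP => [xy | -> ].
  apply/ffunP => i; apply/eqP; apply: contraT => xiy.
  by rewrite -(in_set0 i) -xy inE.
by apply/setP => i; rewrite !inE eqxx.
Qed.

Section Slices.
Variable n : nat.

(* Forget the last bit of a vertex of Q_(n+1), resp. append the bit b. *)
Definition proj (x : hvertex n.+1) : hvertex n :=
  [ffun j => x (widen_ord (leqnSn n) j)].
Definition ext (b : bool) (y : hvertex n) : hvertex n.+1 :=
  [ffun i : 'I_n.+1 => oapp y b (insub (val i) : option 'I_n)].

Lemma proj_ext b y : proj (ext b y) = y.
Proof. by apply/ffunP => j; rewrite !ffunE /= valK. Qed.

Lemma ext_last b y : ext b y ord_max = b.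
Proof. by rewrite ffunE /= insubN // ltnn. Qed.

Lemma ext_proj (x : hvertex n.+1) : ext (x ord_max) (proj x) = x.
Proof.
apply/ffunP => i; rewrite !ffunE; case: insubP => [j _ ij | i_big] /=.
  by rewrite ffunE; congr (x _); apply: val_inj; rewrite /= ij.
congr (x _); apply: val_inj => /=.
by apply/eqP; rewrite eqn_leq leqNgt i_big -ltnS ltn_ord.
Qed.

Lemma hamming_split (x y : hvertex n.+1) :
  hamming x y = (x ord_max != y ord_max) + hamming (proj x) (proj y).
Proof.
rewrite /hamming -!sum1_card !big_mkcond /= big_ord_recr /= addnC.
congr (_ + _); first by rewrite inE; case: (_ != _).
by rewrite [RHS]big_mkcond; apply: eq_bigr => j _; rewrite !inE !ffunE.
Qed.

Lemma adj_split (x y : hvertex n.+1) : hcube_adj n.+1 x y =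
  ((x ord_max != y ord_max) + hamming (proj x) (proj y) == 1).
Proof. by rewrite /hcube_adj -hamming_split. Qed.

Lemma adj_ext b y1 y2 : hcube_adj n.+1 (ext b y1) (ext b y2) = hcube_adj n y1 y2.
Proof. by rewrite adj_split !ext_last !proj_ext eqxx. Qed.

Lemma crossing_edge_proj (x y : hvertex n.+1) :
  hcube_adj n.+1 x y -> x ord_max != y ord_max -> proj x = proj y.
Proof.
rewrite adj_split => + cross; rewrite cross add1n eqSS.
by rewrite hamming_eq0 => /eqP.
Qed.

Definition onto_slice (b : bool) (x : hvertex n.+1) := ext b (proj x).

Lemma onto_slice_id b (x : hvertex n.+1) : x ord_max = b -> onto_slice b x = x.
Proof. by move=> <-; exact: ext_proj. Qed.

Lemma onto_slice_edge b (x y : hvertex n.+1) : hcube_adj n.+1 x y ->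
  onto_slice b x = onto_slice b y \/ hcube_adj n.+1 (onto_slice b x) (onto_slice b y).
Proof.
have [cross xy | same xy] := boolP (x ord_max != y ord_max).
  by left; rewrite /onto_slice (crossing_edge_proj xy cross).
right; rewrite /onto_slice adj_ext.
by move: xy; rewrite adj_split (negbTE same).
Qed.

Definition in_slice (b : bool) : pred (hvertex n.+1) := fun u => u ord_max == b.

Lemma shortest_path_in_slice b (x y : hvertex n.+1) p :
  x ord_max = b -> y ord_max = b -> shortest_path (hcube_adj n.+1) x p y ->
  all (in_slice b) p.
Proof.
move=> xb yb [wp minp]; apply: contraT => leaves.
have wq := collapse_walk (@onto_slice_edge b) wp.
rewrite !onto_slice_id // in wq.
have shorter : size (collapse (onto_slice b) x p) < size p.
  apply: (collapse_lt (e := hcube_adj n.+1) (P := in_slice b)) leaves; last exact/eqP.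
    move=> u v uv /eqP ub vb; congr (ext b _); apply: crossing_edge_proj uv _.
    by rewrite ub eq_sym.
  by case/andP: wp.
by rewrite ltnNge minp in shorter.
Qed.

Lemma walk_ext b y1 q y2 :
  walk (hcube_adj n) y1 q y2 -> walk (hcube_adj n.+1) (ext b y1) (map (ext b) q) (ext b y2).
Proof.
rewrite /walk path_map last_map => /andP[qp /eqP <-]; rewrite eqxx andbT.
by apply: sub_path qp => u v; rewrite /= adj_ext.
Qed.

Lemma walk_proj b (x y : hvertex n.+1) p : x ord_max = b -> all (in_slice b) p ->
  walk (hcube_adj n.+1) x p y -> walk (hcube_adj n) (proj x) (map proj p) (proj y).
Proof.
move=> xb pb /andP[pp /eqP <-]; rewrite /walk path_map last_map eqxx andbT.
apply: (sub_in_path (P := in_slice b)) pp.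
  move=> u v /eqP ub /eqP vb /=; rewrite adj_split ub vb eqxx //.
by rewrite /= pb andbT; exact/eqP.
Qed.

Definition slice (X : {set hvertex n.+1}) (b : bool) : {set hvertex n} :=
  [set y | ext b y \in X].

Lemma slice_mvs (X : {set hvertex n.+1}) b :
  mutual_visibility_set (hcube_adj n.+1) X ->
  mutual_visibility_set (hcube_adj n) (slice X b).
Proof.
move=> mvsX y1 y2; rewrite !inE => y1X y2X.
have [p [[wp minp] int_p]] := mvsX _ _ y1X y2X.
have pb := shortest_path_in_slice (ext_last b y1) (ext_last b y2) (conj wp minp).
exists (map proj p); split; first split.
- by rewrite -[y1](proj_ext b) -[y2](proj_ext b); exact: walk_proj (ext_last b y1) pb wp.
- move=> q wq; rewrite size_map -(size_map (ext b)); exact/minp/walk_ext.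
- move=> v; rewrite /internal size_map -map_take => /mapP[u ui ->].
  rewrite inE -/(onto_slice b u) onto_slice_id; first exact: int_p.
  by apply/eqP; move/allP: pb; apply; exact: mem_take ui.
Qed.

(* Every vertex lies in one of the two slices. *)
Lemma card_le_slices (X : {set hvertex n.+1}) :
  #|X| <= #|slice X false| + #|slice X true|.
Proof.
have cover : X \subset ext false @: slice X false :|: ext true @: slice X true.
  apply/subsetP => x xX; rewrite -(ext_proj x) inE.
  have : ext (x ord_max) (proj x) \in X by rewrite ext_proj.
  by case: (x ord_max) => xb; apply/orP; [right | left]; apply: imset_f; rewrite inE.
apply: leq_trans (subset_leq_card cover) _.
rewrite cardsU; apply: leq_trans (leq_subr _ _) _.
by rewrite leq_add ?leq_imset_card.
Qed.
End Slices.

Theorem corollary3p2 (d : nat) : 2 <= d -> mu_Q d <= 2 * mu_Q d.-1.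
Proof.
case: d => [|n] // _ /=; rewrite /mu_Q {1}/mu.
apply/bigmax_leqP => X /asboolP mvsX.
apply: leq_trans (card_le_slices X) _.
rewrite mul2n -addnn; apply: leq_add; apply: mvs_card_le_mu; exact: slice_mvs.
Qed.
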